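(* Let $\epsilon>0$, $\zeta>1$, and let $N_\epsilon=\{(x,y)\in\mathbb{R}^2: 0<x^2+y^2<\epsilon^2\}$ with the Lorentzian metric $ds^2=4\{(y^2-(\zeta-1)x^2)\,dx^2+(x^2-(\zeta-1)y^2)\,dy^2+2\zeta xy\,dx\,dy\}$, time-oriented so that the function $-x^2+y^2$ increases along future directed timelike curves. Then $(N_\epsilon,g)$ is not causally continuous.
   Context: This is the neighbourhood geometry of type $(1,1)$ (the ''trousers''): the Morse metric $g_{\mu\nu}=h_{\mu\nu}|df|_h^2-\zeta\,\partial_\mu f\,\partial_\nu f$ built from the flat Euclidean metric $h$ and $f=-x^2+y^2$ (plus a constant) on the punctured disc. Chronological relations are computed within $N_\epsilon$: $a\ll b$ iff there is a future directed $C^1$ timelike curve in $N_\epsilon$ from $a$ to $b$; $I^+(a)=\{b:a\ll b\}$, $I^-(a)=\{b:b\ll a\}$; for open $U$, $\downarrow U=\mathrm{Int}\{c:c\ll u\ \forall u\in U\}$, $\uparrow U=\mathrm{Int}\{c:u\ll c\ \forall u\in U\}$. The spacetime is causally continuous if $I^+(a)=\uparrow I^-(a)$ and $I^-(a)=\downarrow I^+(a)$ for all $a\in N_\epsilon$. *)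

From Stdlib Require Import Reals.
From Coquelicot Require Import Coquelicot.
Open Scope R_scope.

Definition pt := (R * R)%type.

Definition inN (eps : R) (p : pt) : Prop :=
  0 < fst p ^ 2 + snd p ^ 2 < eps ^ 2.

(* The metric ds^2 = 4{(y^2-(zeta-1)x^2)dx^2 + (x^2-(zeta-1)y^2)dy^2
   + 2 zeta x y dx dy}, evaluated on the pair of tangent vectors v, w at p. *)
Definition gmet (zeta : R) (p v w : pt) : R :=
  let x := fst p in let y := snd p in
  4 * ((y ^ 2 - (zeta - 1) * x ^ 2) * fst v * fst w
     + (x ^ 2 - (zeta - 1) * y ^ 2) * snd v * snd w
     + zeta * x * y * (fst v * snd w + snd v * fst w)).

Definition df (p v : pt) : R := - 2 * fst p * fst v + 2 * snd p * snd v.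

Definition fut_timelike (zeta : R) (p v : pt) : Prop :=
  gmet zeta p v v < 0 /\ 0 < df p v.

(* C^1 real function (a C^1 curve on [0,1] extends to a C^1 function on R). *)
Definition C1 (u : R -> R) : Prop :=
  forall t, ex_derive u t /\ continuous (Derive u) t.

Definition chron (eps zeta : R) (a b : pt) : Prop :=
  exists X Y : R -> R,
    C1 X /\ C1 Y /\
    (X 0, Y 0) = a /\ (X 1, Y 1) = b /\
    forall t, 0 <= t <= 1 ->
      inN eps (X t, Y t) /\
      fut_timelike zeta (X t, Y t) (Derive X t, Derive Y t).

Definition Ifut (eps zeta : R) (a : pt) : pt -> Prop := fun b => chron eps zeta a b.
Definition Ipast (eps zeta : R) (a : pt) : pt -> Prop := fun b => chron eps zeta b a.

Definition interior2 (S : pt -> Prop) : pt -> Prop :=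
  fun p => exists r, 0 < r /\
    forall q : pt, (fst q - fst p) ^ 2 + (snd q - snd p) ^ 2 < r ^ 2 -> S q.

Definition down (eps zeta : R) (U : pt -> Prop) : pt -> Prop :=
  interior2 (fun c => inN eps c /\ forall u, U u -> chron eps zeta c u).
Definition up (eps zeta : R) (U : pt -> Prop) : pt -> Prop :=
  interior2 (fun c => inN eps c /\ forall u, U u -> chron eps zeta u c).

Definition causally_continuous (eps zeta : R) : Prop :=
  forall a, inN eps a ->
    (forall b, Ifut eps zeta a b <-> up eps zeta (Ipast eps zeta a) b) /\
    (forall b, Ipast eps zeta a b <-> down eps zeta (Ifut eps zeta a) b).

From Stdlib Require Import Reals Lra Psatz Lia.
From Coquelicot Require Import Coquelicot.
Open Scope R_scope.

(** The squaring map z = (x, y) |-> w = (P, Q) = (x^2 - y^2, 2xy) turns the metric into the flat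
    metric dQ^2 - (zeta - 1) dP^2 and the time function into -P.  With k = sqrt (zeta - 1), the
    null coordinates L = Q - kP and M = -Q - kP of the w-plane therefore both increase strictly
    along future timelike curves.  Take a in the first quadrant on the null ray L = 0 and
    b = (0, -eps/2).  A curve from a to b meets the x-axis, where L <= 0, so b is not in I+(a).
    On the other hand every u << a lies in the half-plane y < x with L, M < 0, and every c near b
    lies there with L, M > 0.  A curve in the w-plane from u^2 to c^2 along which L and M increase
    and which passes through the wedge L < 0 < M never meets the slit {P = 0, Q >= 0}, so it lifts
    through the branch of the square root with values in y < x to a timelike curve from u to c.
    Hence b lies in up (I-(a)) but not in I+(a). *)

Lemma C1_continuous f t : C1 f -> continuous f t.
Proof. intros Hf. apply (ex_derive_continuous (K := R_AbsRing) (V := R_NormedModule)), Hf. Qed.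

Lemma C1_of_derive f f' :
  (forall t, is_derive f t (f' t)) -> (forall t, ex_derive f' t) -> C1 f.
Proof.
  intros Hd He t. split.
  - eexists; apply Hd.
  - apply continuous_ext with f'.
    + intros s. symmetry. apply is_derive_unique, Hd.
    + apply (ex_derive_continuous (K := R_AbsRing) (V := R_NormedModule)), He.
Qed.

Lemma C1_const c : C1 (fun _ => c).
Proof.
  intros t. split; [apply ex_derive_const |].
  apply continuous_ext with (fun _ => 0); [| apply continuous_const].
  intros s. rewrite Derive_const. reflexivity.
Qed.

Lemma C1_plus f g : C1 f -> C1 g -> C1 (fun t => f t + g t).
Proof.
  intros Hf Hg t. split.
  - apply (ex_derive_plus f g); [apply Hf | apply Hg].
  - apply continuous_ext with (fun s => Derive f s + Derive g s).
    + intros s. rewrite Derive_plus; [reflexivity | apply Hf | apply Hg].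
    + apply (continuous_plus (Derive f) (Derive g)); [apply Hf | apply Hg].
Qed.

Lemma C1_opp f : C1 f -> C1 (fun t => - f t).
Proof.
  intros Hf t. split.
  - apply (ex_derive_opp f), Hf.
  - apply continuous_ext with (fun s => - Derive f s).
    + intros s. rewrite Derive_opp. reflexivity.
    + apply (continuous_opp (Derive f)), Hf.
Qed.

Lemma C1_mult f g : C1 f -> C1 g -> C1 (fun t => f t * g t).
Proof.
  intros Hf Hg t. split.
  - apply (ex_derive_mult f g); [apply Hf | apply Hg].
  - apply continuous_ext with (fun s => Derive f s * g s + f s * Derive g s).
    + intros s. rewrite Derive_mult; [reflexivity | apply Hf | apply Hg].
    + apply (continuous_plus (fun s => Derive f s * g s) (fun s => f s * Derive g s)).
      * apply (continuous_mult (Derive f) g); [apply Hf | apply C1_continuous, Hg].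
      * apply (continuous_mult f (Derive g)); [apply C1_continuous, Hf | apply Hg].
Qed.

Lemma C1_pow f n : C1 f -> C1 (fun t => f t ^ n).
Proof.
  intros Hf. induction n as [|n IH]; simpl.
  - apply C1_const.
  - apply C1_mult; assumption.
Qed.

Lemma C1_inv f : C1 f -> (forall t, f t <> 0) -> C1 (fun t => / f t).
Proof.
  intros Hf Hn t. split.
  - apply (ex_derive_inv f); [apply Hf | apply Hn].
  - apply continuous_ext with (fun s => - Derive f s * / (f s * f s)).
    + intros s. rewrite Derive_inv by (apply Hf || apply Hn). unfold Rdiv. simpl. now rewrite Rmult_1_r.
    + apply (continuous_mult (fun s => - Derive f s) (fun s => / (f s * f s))).
      * apply (continuous_opp (Derive f)), Hf.
      * apply (continuous_Rinv_comp (fun s => f s * f s)).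
        -- apply (continuous_mult f f); apply C1_continuous, Hf.
        -- apply Rmult_integral_contrapositive_currified; apply Hn.
Qed.

Lemma C1_sqrt f : C1 f -> (forall t, 0 < f t) -> C1 (fun t => sqrt (f t)).
Proof.
  intros Hf Hp.
  assert (Hd : forall s, is_derive (fun t => sqrt (f t)) s (Derive f s * / (2 * sqrt (f s)))).
  { intros s. apply is_derive_sqrt; [apply Derive_correct, Hf | apply Hp]. }
  intros t. split.
  - eexists. apply Hd.
  - apply continuous_ext with (fun s => Derive f s * / (2 * sqrt (f s))).
    + intros s. symmetry. apply is_derive_unique, Hd.
    + apply (continuous_mult (Derive f) (fun s => / (2 * sqrt (f s)))); [apply Hf |].
      apply (continuous_Rinv_comp (fun s => 2 * sqrt (f s))).
      * apply (continuous_mult (fun _ => 2) (fun s => sqrt (f s))); [apply continuous_const |].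
        apply (continuous_sqrt_comp f), C1_continuous, Hf.
      * pose proof (sqrt_lt_R0 _ (Hp t)). lra.
Qed.

Lemma C1_root f a b : C1 f -> a <= b -> f a * f b <= 0 -> exists c, a <= c <= b /\ f c = 0.
Proof.
  intros Hf Hab Hs.
  destruct (IVT_cor f a b) as [c Hc]; [| assumption | assumption | now exists c].
  intros t. apply continuity_pt_filterlim, C1_continuous, Hf.
Qed.

Lemma lt_of_derive_pos f f' a b : a < b ->
  (forall c, a <= c <= b -> is_derive f c (f' c)) ->
  (forall c, a <= c <= b -> 0 < f' c) -> f a < f b.
Proof.
  intros Hab Hd Hp.
  destruct (MVT_cor2 f f' a b Hab) as [c [Hfc Hc]].
  { intros c Hc. apply is_derive_Reals, Hd, Hc. }
  assert (0 < f' c) by (apply Hp; lra).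
  nra.
Qed.

Definition sq (z : pt) : pt := (fst z ^ 2 - snd z ^ 2, 2 * fst z * snd z).

Definition dsq (p v : pt) : pt :=
  (2 * (fst p * fst v - snd p * snd v), 2 * (fst p * snd v + snd p * fst v)).

Definition norm2 (w : pt) : R := fst w ^ 2 + snd w ^ 2.

Definition lin (a b : R) (w : pt) : R := a * fst w + b * snd w.

Definition nullL (k : R) : pt -> R := lin (- k) 1.
Definition nullM (k : R) : pt -> R := lin (- k) (- 1).

Definition slit (w : pt) : Prop := fst w = 0 /\ 0 <= snd w.

Lemma norm2_sq z : norm2 (sq z) = norm2 z ^ 2.
Proof. unfold norm2, sq; simpl; ring. Qed.

Lemma fut_timelike_null zeta k p v : 0 < k -> k * k = zeta - 1 ->
  fut_timelike zeta p v <-> 0 < nullL k (dsq p v) /\ 0 < nullM k (dsq p v).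
Proof.
  intros Hk Hkk.
  assert (Hg : gmet zeta p v v = - (nullL k (dsq p v) * nullM k (dsq p v))).
  { unfold gmet, nullL, nullM, lin, dsq; simpl. replace zeta with (k * k + 1) by lra. ring. }
  assert (Hdf : 2 * k * df p v = nullL k (dsq p v) + nullM k (dsq p v)).
  { unfold df, nullL, nullM, lin, dsq; simpl. ring. }
  unfold fut_timelike. rewrite Hg.
  set (L := nullL k (dsq p v)) in *; set (M := nullM k (dsq p v)) in *.
  split.
  - intros [H1 H2].
    assert (0 < L + M) by (rewrite <- Hdf; apply Rmult_lt_0_compat; lra).
    split; nra.
  - intros [H1 H2]. split; [nra |].
    apply (Rmult_lt_reg_l (2 * k)); lra.
Qed.

Lemma is_derive_lin_sq a b (X Y : R -> R) t : ex_derive X t -> ex_derive Y t ->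
  is_derive (fun s => lin a b (sq (X s, Y s))) t
            (lin a b (dsq (X t, Y t) (Derive X t, Derive Y t))).
Proof.
  intros HX HY. unfold lin, sq, dsq; simpl. auto_derive; [tauto |].
  change (Derive (fun s => X s) t) with (Derive X t).
  change (Derive (fun s => Y s) t) with (Derive Y t).
  ring.
Qed.

Lemma timelike_lin_increasing zeta k a b (X Y : R -> R) : 0 < k -> k * k = zeta - 1 ->
  (forall w, 0 < nullL k w -> 0 < nullM k w -> 0 < lin a b w) ->
  C1 X -> C1 Y ->
  (forall t, 0 <= t <= 1 -> fut_timelike zeta (X t, Y t) (Derive X t, Derive Y t)) ->
  forall t1 t2, 0 <= t1 -> t1 < t2 -> t2 <= 1 ->
  lin a b (sq (X t1, Y t1)) < lin a b (sq (X t2, Y t2)).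
Proof.
  intros Hk Hkk Hab HX HY HT t1 t2 H1 H12 H2.
  apply (lt_of_derive_pos (fun s => lin a b (sq (X s, Y s)))
           (fun s => lin a b (dsq (X s, Y s) (Derive X s, Derive Y s)))); [exact H12 | |].
  - intros c _. apply is_derive_lin_sq; [apply HX | apply HY].
  - intros c Hc. apply Hab; apply (fut_timelike_null zeta k); auto; apply HT; lra.
Qed.

Lemma chron_lin_lt eps zeta k a b p q : 0 < k -> k * k = zeta - 1 ->
  (forall w, 0 < nullL k w -> 0 < nullM k w -> 0 < lin a b w) ->
  chron eps zeta p q -> lin a b (sq p) < lin a b (sq q).
Proof.
  intros Hk Hkk Hab (X & Y & HX & HY & <- & <- & HT).
  apply (timelike_lin_increasing zeta k); auto; try lra.
  intros t Ht. apply HT, Ht.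
Qed.

(* The square root of w in the half-plane y < x, smooth away from the slit. *)
Definition sqrt_branch (w : pt) : pt :=
  let A := sqrt (sqrt (norm2 w) - snd w) in ((A + fst w / A) / 2, (fst w / A - A) / 2).

Lemma norm2_pos w : ~ slit w -> 0 < norm2 w.
Proof.
  intros Hw. unfold norm2.
  destruct (Req_dec (fst w) 0) as [HP | HP].
  - assert (snd w < 0) by (destruct (Rlt_or_le (snd w) 0); [assumption | now exfalso; apply Hw]).
    nra.
  - assert (0 < fst w ^ 2) by (apply pow2_gt_0, HP). nra.
Qed.

Lemma slit_gap w : ~ slit w -> 0 < sqrt (norm2 w) - snd w.
Proof.
  intros Hw. unfold norm2.
  destruct (Rlt_or_le (snd w) 0) as [HQ | HQ].
  - pose proof (sqrt_pos (fst w ^ 2 + snd w ^ 2)). lra.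
  - assert (HP : fst w <> 0) by (intros HP; now apply Hw).
    assert (0 < fst w ^ 2) by (apply pow2_gt_0, HP).
    rewrite <- (sqrt_pow2 (snd w) HQ) at 2.
    assert (sqrt (snd w ^ 2) < sqrt (fst w ^ 2 + snd w ^ 2))
      by (apply sqrt_lt_1_alt; split; [apply pow2_ge_0 | lra]).
    lra.
Qed.

Lemma sq_sqrt_branch w : ~ slit w -> sq (sqrt_branch w) = w.
Proof.
  intros Hw. pose proof (slit_gap w Hw) as Hg.
  destruct w as [P Q]. unfold sqrt_branch, sq, norm2 in *; cbn [fst snd] in *.
  set (S := sqrt (P ^ 2 + Q ^ 2)) in *. set (A := sqrt (S - Q)).
  assert (HA : 0 < A) by (apply sqrt_lt_R0, Hg).
  assert (HAA : A * A = S - Q) by (apply sqrt_sqrt; lra).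
  assert (HSS : S * S = P ^ 2 + Q ^ 2) by (apply sqrt_sqrt; nra).
  f_equal.
  - field. lra.
  - assert (HP : P * P = A * A * (A * A + 2 * Q)) by (rewrite HAA; nra).
    transitivity ((P * P / (A * A) - A * A) / 2); [field; lra |].
    rewrite HP. field. lra.
Qed.

Lemma sqrt_branch_sq z : snd z < fst z -> sqrt_branch (sq z) = z.
Proof.
  destruct z as [x y]; cbn [fst snd]; intros H.
  unfold sqrt_branch, norm2, sq; cbn [fst snd].
  replace ((x ^ 2 - y ^ 2) ^ 2 + (2 * x * y) ^ 2) with ((x ^ 2 + y ^ 2) ^ 2) by ring.
  rewrite sqrt_pow2 by nra.
  replace (x ^ 2 + y ^ 2 - 2 * x * y) with ((x - y) ^ 2) by ring.
  rewrite sqrt_pow2 by lra.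
  f_equal; field; lra.
Qed.

Lemma norm2_sqrt_branch w : ~ slit w -> norm2 (sqrt_branch w) = sqrt (norm2 w).
Proof.
  intros Hw. pose proof (norm2_sq (sqrt_branch w)) as E.
  rewrite sq_sqrt_branch in E by exact Hw.
  rewrite E, sqrt_pow2; [reflexivity | unfold norm2; nra].
Qed.

Lemma C1_sqrt_branch (w : R -> pt) :
  C1 (fun t => fst (w t)) -> C1 (fun t => snd (w t)) -> (forall t, ~ slit (w t)) ->
  C1 (fun t => fst (sqrt_branch (w t))) /\ C1 (fun t => snd (sqrt_branch (w t))).
Proof.
  intros HP HQ Hw.
  assert (HS : C1 (fun t => sqrt (norm2 (w t)))).
  { apply C1_sqrt; [| intros t; apply norm2_pos, Hw].
    apply C1_plus; apply C1_pow; assumption. }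
  set (A := fun t => sqrt (sqrt (norm2 (w t)) - snd (w t))).
  assert (HA0 : forall t, A t <> 0) by (intros t; apply Rgt_not_eq, sqrt_lt_R0, slit_gap, Hw).
  assert (HA : C1 A).
  { apply C1_sqrt; [| intros t; apply slit_gap, Hw].
    apply (C1_plus _ (fun t => - snd (w t))); [exact HS | apply C1_opp, HQ]. }
  assert (HB : C1 (fun t => fst (w t) / A t)) by (apply C1_mult; [exact HP | apply C1_inv; assumption]).
  split.
  - change (C1 (fun t => (A t + fst (w t) / A t) * / 2)).
    apply (C1_mult _ (fun _ => / 2)); [apply C1_plus; assumption | apply C1_const].
  - change (C1 (fun t => (fst (w t) / A t + - A t) * / 2)).
    apply (C1_mult _ (fun _ => / 2)); [apply C1_plus; [exact HB | apply C1_opp, HA] | apply C1_const].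
Qed.

Definition slit_free_future_path (k rho : R) (w : R -> pt) : Prop :=
  C1 (fun t => fst (w t)) /\ C1 (fun t => snd (w t)) /\ (forall t, ~ slit (w t)) /\
  forall t, 0 <= t <= 1 -> norm2 (w t) < rho ^ 2 /\
    0 < Derive (fun s => nullL k (w s)) t /\ 0 < Derive (fun s => nullM k (w s)) t.

Lemma chron_of_lifted_path eps zeta k (w : R -> pt) u q : 0 < k -> k * k = zeta - 1 ->
  slit_free_future_path k (eps ^ 2) w ->
  w 0 = sq u -> w 1 = sq q -> snd u < fst u -> snd q < fst q -> chron eps zeta u q.
Proof.
  intros Hk Hkk (HP & HQ & Hw & Hcurve) Hu Hq Hsu Hsq0.
  destruct (C1_sqrt_branch w HP HQ Hw) as [HX HY].
  set (X := fun t => fst (sqrt_branch (w t))) in HX.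
  set (Y := fun t => snd (sqrt_branch (w t))) in HY.
  assert (HZ : forall t, (X t, Y t) = sqrt_branch (w t))
    by (intros t; unfold X, Y; destruct (sqrt_branch (w t)); reflexivity).
  assert (Hsq : forall t, sq (X t, Y t) = w t) by (intros t; rewrite HZ; apply sq_sqrt_branch, Hw).
  assert (Hlin : forall a b t,
    Derive (fun s => lin a b (w s)) t = lin a b (dsq (X t, Y t) (Derive X t, Derive Y t))).
  { intros a b t. rewrite <- (Derive_ext (fun s => lin a b (sq (X s, Y s)))) by (intros s; now rewrite Hsq).
    apply is_derive_unique, is_derive_lin_sq; [apply HX | apply HY]. }
  exists X, Y. split; [exact HX |]. split; [exact HY |].
  split; [rewrite HZ, Hu; apply sqrt_branch_sq, Hsu |].
  split; [rewrite HZ, Hq; apply sqrt_branch_sq, Hsq0 |].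
  intros t Ht. destruct (Hcurve t Ht) as (Hn & HL & HM). split.
  - change (0 < norm2 (X t, Y t) < eps ^ 2).
    rewrite HZ, norm2_sqrt_branch by apply Hw. split.
    + apply sqrt_lt_R0, norm2_pos, Hw.
    + rewrite <- (sqrt_pow2 (eps ^ 2)) by apply pow2_ge_0.
      apply sqrt_lt_1_alt. split; [unfold norm2; nra | exact Hn].
  - apply (fut_timelike_null zeta k); [exact Hk | exact Hkk |].
    unfold nullL, nullM in *. rewrite <- !Hlin. auto.
Qed.

(* The degree is odd so that, for A0 < A1 < A2, the blend increases on all of R and not only on
   [0, 1]: the path has to avoid the slit for every t, as C1 asks for derivatives everywhere. *)
Definition blend (m : nat) (t A0 A1 A2 : R) : R :=
  (1 - t) ^ S (2 * m) * A0 + (1 - (1 - t) ^ S (2 * m) - t ^ S (2 * m)) * A1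
  + t ^ S (2 * m) * A2.

Definition dblend (m : nat) (t A0 A1 A2 : R) : R :=
  INR (S (2 * m)) * ((1 - t) ^ (2 * m) * (A1 - A0) + t ^ (2 * m) * (A2 - A1)).

Definition blend_pt (m : nat) (t : R) (A0 A1 A2 : pt) : pt :=
  (blend m t (fst A0) (fst A1) (fst A2), blend m t (snd A0) (snd A1) (snd A2)).

Lemma is_derive_blend m A0 A1 A2 t :
  is_derive (fun s => blend m s A0 A1 A2) t (dblend m t A0 A1 A2).
Proof.
  unfold blend, dblend. auto_derive; [trivial |].
  (* auto_derive leaves INR (S (2 * m)) unfolded one step *)
  change (match (m + (m + 0))%nat with 0%nat => 1 | S _ => INR (m + (m + 0)) + 1 end)
    with (INR (S (2 * m))).
  change (m + (m + 0))%nat with (2 * m)%nat.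
  unfold Rminus. ring.
Qed.

Lemma C1_blend m A0 A1 A2 : C1 (fun t => blend m t A0 A1 A2).
Proof.
  apply C1_of_derive with (fun t => dblend m t A0 A1 A2); [apply is_derive_blend |].
  intros t. unfold dblend. auto_derive. trivial.
Qed.

Lemma dblend_pos m A0 A1 A2 t : A0 < A1 -> A1 < A2 -> 0 < dblend m t A0 A1 A2.
Proof.
  intros H01 H12. unfold dblend.
  apply Rmult_lt_0_compat; [apply lt_0_INR; lia |].
  rewrite !pow_mult.
  assert (0 <= ((1 - t) ^ 2) ^ m) by (apply pow_le, pow2_ge_0).
  assert (0 <= (t ^ 2) ^ m) by (apply pow_le, pow2_ge_0).
  destruct (Req_dec t 0) as [-> | Ht].
  - replace (1 - 0) with 1 by ring. rewrite pow1, pow1. nra.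
  - assert (0 < (t ^ 2) ^ m) by (apply pow_lt, pow2_gt_0, Ht). nra.
Qed.

Lemma blend_increasing m A0 A1 A2 s t : A0 < A1 -> A1 < A2 -> s < t ->
  blend m s A0 A1 A2 < blend m t A0 A1 A2.
Proof.
  intros H01 H12 Hst.
  apply (lt_of_derive_pos (fun t => blend m t A0 A1 A2) (fun t => dblend m t A0 A1 A2)); auto.
  - intros c _. apply is_derive_blend.
  - intros c _. apply dblend_pos; assumption.
Qed.

Lemma blend_0 m A0 A1 A2 : blend m 0 A0 A1 A2 = A0.
Proof. unfold blend. replace (1 - 0) with 1 by ring. rewrite pow1, pow_i by lia. ring. Qed.

Lemma blend_1 m A0 A1 A2 : blend m 1 A0 A1 A2 = A2.
Proof. unfold blend. replace (1 - 1) with 0 by ring. rewrite pow1, pow_i by lia. ring. Qed.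

Lemma blend_half m A0 A1 A2 :
  blend m (1 / 2) A0 A1 A2 = A1 + (1 / 2) ^ S (2 * m) * ((A0 - A1) + (A2 - A1)).
Proof. unfold blend. replace (1 - 1 / 2) with (1 / 2) by field. ring. Qed.

Lemma lin_blend_pt a b m t A0 A1 A2 :
  lin a b (blend_pt m t A0 A1 A2) = blend m t (lin a b A0) (lin a b A1) (lin a b A2).
Proof. unfold lin, blend_pt, blend; cbn [fst snd]. ring. Qed.

Lemma pow_S_le_self x n : 0 <= x <= 1 -> x ^ S n <= x.
Proof.
  intros Hx. simpl.
  assert (x ^ n <= 1) by (rewrite <- (pow1 n); apply pow_incr; lra).
  assert (0 <= x ^ n) by (apply pow_le; lra).
  nra.
Qed.

Lemma norm2_blend_pt_lt m t A0 A1 A2 rho : 0 <= t <= 1 ->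
  norm2 A0 < rho -> norm2 A1 < rho -> norm2 A2 < rho -> norm2 (blend_pt m t A0 A1 A2) < rho.
Proof.
  intros Ht H0 H1 H2.
  set (a0 := (1 - t) ^ S (2 * m)); set (a2 := t ^ S (2 * m)); set (a1 := 1 - a0 - a2).
  assert (Ha0 : 0 <= a0) by (apply pow_le; lra).
  assert (Ha2 : 0 <= a2) by (apply pow_le; lra).
  assert (Ha1 : 0 <= a1).
  { pose proof (pow_S_le_self (1 - t) (2 * m)). pose proof (pow_S_le_self t (2 * m)).
    unfold a1, a0, a2. lra. }
  destruct A0 as [x0 y0], A1 as [x1 y1], A2 as [x2 y2].
  unfold norm2, blend_pt, blend in *; cbn [fst snd] in *. fold a0 a2 a1.
  assert (Hjensen : (a0 * x0 + a1 * x1 + a2 * x2) ^ 2 + (a0 * y0 + a1 * y1 + a2 * y2) ^ 2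
    = a0 * (x0 ^ 2 + y0 ^ 2) + a1 * (x1 ^ 2 + y1 ^ 2) + a2 * (x2 ^ 2 + y2 ^ 2)
      - (a0 * a1 * ((x0 - x1) ^ 2 + (y0 - y1) ^ 2) + a0 * a2 * ((x0 - x2) ^ 2 + (y0 - y2) ^ 2)
         + a1 * a2 * ((x1 - x2) ^ 2 + (y1 - y2) ^ 2))) by (unfold a1; ring).
  rewrite Hjensen.
  assert (Hsq : forall u v, 0 <= u ^ 2 + v ^ 2)
    by (intros u v; apply Rplus_le_le_0_compat; apply pow2_ge_0).
  assert (0 <= a0 * a1 * ((x0 - x1) ^ 2 + (y0 - y1) ^ 2)) by (apply Rmult_le_pos; [apply Rmult_le_pos | apply Hsq]; assumption).
  assert (0 <= a0 * a2 * ((x0 - x2) ^ 2 + (y0 - y2) ^ 2)) by (apply Rmult_le_pos; [apply Rmult_le_pos | apply Hsq]; assumption).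
  assert (0 <= a1 * a2 * ((x1 - x2) ^ 2 + (y1 - y2) ^ 2)) by (apply Rmult_le_pos; [apply Rmult_le_pos | apply Hsq]; assumption).
  set (d := Rmin (rho - (x0 ^ 2 + y0 ^ 2)) (Rmin (rho - (x1 ^ 2 + y1 ^ 2)) (rho - (x2 ^ 2 + y2 ^ 2)))).
  assert (d <= rho - (x0 ^ 2 + y0 ^ 2)) by apply Rmin_l.
  assert (d <= rho - (x1 ^ 2 + y1 ^ 2)) by (eapply Rle_trans; [apply Rmin_r | apply Rmin_l]).
  assert (d <= rho - (x2 ^ 2 + y2 ^ 2)) by (eapply Rle_trans; [apply Rmin_r | apply Rmin_r]).
  assert (0 < d) by (repeat apply Rmin_glb_lt; lra).
  assert (a0 + a1 + a2 = 1) by (unfold a1; ring).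
  nra.
Qed.

Lemma not_slit_of_null_increasing k (w : R -> pt) t0 :
  (forall s t, s < t -> nullL k (w s) < nullL k (w t)) ->
  (forall s t, s < t -> nullM k (w s) < nullM k (w t)) ->
  nullL k (w t0) < 0 < nullM k (w t0) -> forall t, ~ slit (w t).
Proof.
  intros HL HM [HL0 HM0] t [HP HQ].
  assert (nullL k (w t) = snd (w t)) by (unfold nullL, lin; rewrite HP; ring).
  assert (nullM k (w t) = - snd (w t)) by (unfold nullM, lin; rewrite HP; ring).
  destruct (Rle_or_lt t t0) as [[Ht | ->] | Ht].
  - specialize (HL t t0 Ht). lra.
  - lra.
  - specialize (HM t0 t Ht). lra.
Qed.

Lemma exists_pos_lt3 a b c : 0 < a -> 0 < b -> 0 < c -> exists d, 0 < d /\ d < a /\ d < b /\ d < c.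
Proof.
  intros Ha Hb Hc. exists (Rmin a (Rmin b c) / 2).
  pose proof (Rmin_l a (Rmin b c)). pose proof (Rmin_r a (Rmin b c)).
  pose proof (Rmin_l b c). pose proof (Rmin_r b c).
  assert (0 < Rmin a (Rmin b c)) by (repeat apply Rmin_glb_lt; assumption).
  lra.
Qed.

Lemma exists_odd_half_pow_lt C d : 0 < d -> exists m, (1 / 2) ^ S (2 * m) * C < d.
Proof.
  intros Hd. destruct (Rle_or_lt C 0) as [HC | HC].
  - exists 0%nat. assert (0 < (1 / 2) ^ S (2 * 0)) by (apply pow_lt; lra). nra.
  - destruct (pow_lt_1_zero (1 / 2) ltac:(rewrite Rabs_right; lra) (d / C)
                ltac:(apply Rdiv_lt_0_compat; lra)) as [m Hm].
    exists m. specialize (Hm (S (2 * m)) ltac:(lia)).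
    rewrite Rabs_right in Hm by (apply Rle_ge, pow_le; lra).
    apply (Rmult_lt_compat_r C) in Hm; [| exact HC].
    unfold Rdiv in Hm. rewrite Rmult_assoc, Rinv_l, Rmult_1_r in Hm by lra. exact Hm.
Qed.

Lemma exists_slit_free_future_path k rho (wu wq : pt) : 0 < rho ->
  norm2 wu < rho ^ 2 -> nullL k wu < 0 -> nullM k wu < 0 ->
  norm2 wq < rho ^ 2 -> 0 < nullL k wq -> 0 < nullM k wq ->
  exists w, slit_free_future_path k rho w /\ w 0 = wu /\ w 1 = wq.
Proof.
  intros Hrho Hu HLu HMu Hq HLq HMq.
  destruct (exists_pos_lt3 (- nullL k wu) (nullM k wq) rho) as (delta & Hd0 & HdL & HdM & Hdrho);
    [lra | lra | lra |].
  (* W lies in the wedge nullL < 0 < nullM; for large m the blend passes near W at t = 1/2. *)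
  set (W := (0, - delta)).
  destruct (exists_odd_half_pow_lt (nullL k wq - nullM k wu + 2 * delta) delta Hd0) as [m Hm].
  assert (Hh : 0 < (1 / 2) ^ S (2 * m)) by (apply pow_lt; lra).
  set (w := fun t => blend_pt m t wu W wq).
  assert (HwL : forall t, nullL k (w t) = blend m t (nullL k wu) (- delta) (nullL k wq)).
  { intros t. unfold w, nullL. rewrite lin_blend_pt. unfold lin, W; cbn [fst snd].
    f_equal; ring. }
  assert (HwM : forall t, nullM k (w t) = blend m t (nullM k wu) delta (nullM k wq)).
  { intros t. unfold w, nullM. rewrite lin_blend_pt. unfold lin, W; cbn [fst snd].
    f_equal; ring. }
  exists w. split; [split; [| split; [| split]] | split].
  - apply C1_blend.
  - apply C1_blend.
  - apply (not_slit_of_null_increasing k w (1 / 2)).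
    + intros s t Hst. rewrite !HwL. apply blend_increasing; lra.
    + intros s t Hst. rewrite !HwM. apply blend_increasing; lra.
    + rewrite HwL, HwM, !blend_half. split; nra.
  - intros t Ht. split; [| split].
    + apply norm2_blend_pt_lt; [exact Ht | exact Hu | | exact Hq].
      unfold norm2, W; cbn [fst snd]. nra.
    + rewrite (Derive_ext _ _ t HwL), (is_derive_unique _ _ _ (is_derive_blend _ _ _ _ _)).
      apply dblend_pos; lra.
    + rewrite (Derive_ext _ _ t HwM), (is_derive_unique _ _ _ (is_derive_blend _ _ _ _ _)).
      apply dblend_pos; lra.
  - unfold w, blend_pt. rewrite !blend_0. now destruct wu.
  - unfold w, blend_pt. rewrite !blend_1. now destruct wq.
Qed.

Lemma chron_of_null_separated eps zeta k u q : 0 < k -> k * k = zeta - 1 ->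
  inN eps u -> snd u < fst u -> nullL k (sq u) < 0 -> nullM k (sq u) < 0 ->
  inN eps q -> snd q < fst q -> 0 < nullL k (sq q) -> 0 < nullM k (sq q) ->
  chron eps zeta u q.
Proof.
  intros Hk Hkk Hu Hsu HLu HMu Hq Hsq HLq HMq.
  change (0 < norm2 u < eps ^ 2) in Hu. change (0 < norm2 q < eps ^ 2) in Hq.
  assert (Heps2 : 0 < eps ^ 2) by lra.
  assert (Hnu : norm2 (sq u) < (eps ^ 2) ^ 2) by (rewrite norm2_sq; nra).
  assert (Hnq : norm2 (sq q) < (eps ^ 2) ^ 2) by (rewrite norm2_sq; nra).
  destruct (exists_slit_free_future_path k (eps ^ 2) (sq u) (sq q)) as (w & Hw & Hw0 & Hw1);
    auto.
  exact (chron_of_lifted_path eps zeta k w u q Hk Hkk Hw Hw0 Hw1 Hsu Hsq).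
Qed.

Definition null_slope (zeta : R) : R := sqrt (zeta - 1).

(* tan theta, where tan (2 theta) = null_slope zeta: it puts apt on the null ray nullL = 0. *)
Definition tan_half (zeta : R) : R := (sqrt zeta - 1) / null_slope zeta.

Definition apt (eps zeta : R) : pt := (eps / 2, eps / 2 * tan_half zeta).

Definition bpt (eps : R) : pt := (0, - (eps / 2)).

Lemma bpt_nbhd eps k : 0 < eps -> 0 < k ->
  exists r, 0 < r /\ forall c, (fst c - fst (bpt eps)) ^ 2 + (snd c - snd (bpt eps)) ^ 2 < r ^ 2 ->
    inN eps c /\ snd c < fst c /\ 0 < nullL k (sq c) /\ 0 < nullM k (sq c).
Proof.
  intros Heps Hk. set (b := eps / 2).
  assert (Hb : 0 < b) by (unfold b; lra).
  set (r := b * k / (4 * (1 + k))).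
  assert (Hr : 4 * (1 + k) * r = b * k) by (unfold r; field; lra).
  assert (Hr0 : 0 < r) by (unfold r; apply Rdiv_lt_0_compat; nra).
  exists r. split; [exact Hr0 |].
  intros [x y]. unfold bpt, inN, nullL, nullM, lin, sq; cbn [fst snd]. fold b. intros Hc.
  replace (x - 0) with x in Hc by ring. replace (y - - b) with (y + b) in Hc by ring.
  assert (Hxx : x ^ 2 < r ^ 2) by (pose proof (pow2_ge_0 (y + b)); lra).
  assert (Hx : - r < x < r) by (split; nra).
  assert (Hy : - b - r < y < - b + r) by (pose proof (pow2_ge_0 x); split; nra).
  assert (Hrb : r <= b / 4) by nra.
  assert (Hxy : - (r * (b + r)) < x * y < r * (b + r)) by (split; nra).
  assert (Hyy : (b - r) ^ 2 < y ^ 2) by nra.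
  assert (Hwedge : 2 * (r * (b + r)) <= k * ((b - r) ^ 2 - r ^ 2)) by nra.
  assert (Hk2 : k * ((b - r) ^ 2 - r ^ 2) < k * (y ^ 2 - x ^ 2))
    by (apply Rmult_lt_compat_l; lra).
  assert (Heb : eps = 2 * b) by (unfold b; field).
  repeat split; try lra.
  - pose proof (pow2_ge_0 (b - r)). pose proof (pow2_ge_0 x). lra.
  - rewrite Heb. nra.
Qed.

Section Trousers.

Variables eps zeta : R.
Hypothesis Heps : 0 < eps.
Hypothesis Hzeta : 1 < zeta.

Local Notation k := (null_slope zeta).

Lemma null_slope_pos : 0 < k.
Proof. apply sqrt_lt_R0. lra. Qed.

Lemma null_slope_sq : k * k = zeta - 1.
Proof. apply sqrt_sqrt. lra. Qed.

Lemma tan_half_spec : 0 < tan_half zeta < 1 /\ 2 * tan_half zeta = k * (1 - tan_half zeta ^ 2).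
Proof.
  pose proof null_slope_pos as Hk. pose proof null_slope_sq as Hkk.
  assert (Hs : sqrt zeta * sqrt zeta = zeta) by (apply sqrt_sqrt; lra).
  assert (Hs1 : 1 < sqrt zeta) by (rewrite <- sqrt_1; apply sqrt_lt_1_alt; lra).
  unfold tan_half. split.
  - split; [apply Rdiv_lt_0_compat; lra |].
    apply (Rmult_lt_reg_r k); [exact Hk |].
    unfold Rdiv. rewrite Rmult_assoc, Rinv_l, Rmult_1_r, Rmult_1_l by lra. nra.
  - field_simplify; [| lra | lra]. f_equal.
    replace (k ^ 2) with (k * k) by ring.
    replace (sqrt zeta ^ 2) with (sqrt zeta * sqrt zeta) by ring.
    rewrite Hkk, Hs. ring.
Qed.

Lemma apt_below_diag : 0 < snd (apt eps zeta) < fst (apt eps zeta).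
Proof.
  destruct tan_half_spec as [[Ht0 Ht1] _].
  unfold apt; cbn [fst snd]. split; nra.
Qed.

Lemma apt_in : inN eps (apt eps zeta).
Proof.
  pose proof apt_below_diag as Ha. unfold inN, apt in *; cbn [fst snd] in *.
  split; nra.
Qed.

Lemma nullL_apt : nullL k (sq (apt eps zeta)) = 0.
Proof.
  destruct tan_half_spec as [_ Ht].
  unfold nullL, lin, sq, apt; cbn [fst snd].
  replace (- k * ((eps / 2) ^ 2 - (eps / 2 * tan_half zeta) ^ 2)
           + 1 * (2 * (eps / 2) * (eps / 2 * tan_half zeta)))
    with ((eps / 2) ^ 2 * (2 * tan_half zeta - k * (1 - tan_half zeta ^ 2))) by ring.
  rewrite Ht. ring.
Qed.

Lemma not_chron_apt_bpt : ~ chron eps zeta (apt eps zeta) (bpt eps).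
Proof.
  destruct tan_half_spec as [[Ht0 Ht1] _].
  intros (X & Y & HX & HY & Ha & Hb & HT).
  assert (HY0 : Y 0 = eps / 2 * tan_half zeta) by exact (f_equal snd Ha).
  assert (HY1 : Y 1 = - (eps / 2)) by exact (f_equal snd Hb).
  destruct (C1_root Y 0 1 HY) as (c & Hc & HYc); [lra | rewrite HY0, HY1; nra |].
  assert (Hc0 : 0 < c).
  { destruct Hc as [[Hc0 | <-] _]; [exact Hc0 |]. rewrite HY0 in HYc. nra. }
  assert (Hinc : nullL k (sq (X 0, Y 0)) < nullL k (sq (X c, Y c))).
  { apply (timelike_lin_increasing zeta k (- k) 1 X Y null_slope_pos null_slope_sq);
      auto; try lra.
    intros t Ht. apply HT, Ht. }
  rewrite Ha, nullL_apt, HYc in Hinc.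
  unfold nullL, lin, sq in Hinc; cbn [fst snd] in Hinc.
  pose proof null_slope_pos. nra.
Qed.

Lemma chron_apt_below_diag u : chron eps zeta u (apt eps zeta) -> snd u < fst u.
Proof.
  pose proof apt_below_diag as Ha0. unfold apt in Ha0; cbn [fst snd] in Ha0.
  intros (X & Y & HX & HY & Hu & Ha & HT).
  assert (HX1 : X 1 = eps / 2) by exact (f_equal fst Ha).
  assert (HY1 : Y 1 = eps / 2 * tan_half zeta) by exact (f_equal snd Ha).
  destruct (Rlt_or_le (snd u) (fst u)) as [Hsu | Hsu]; [exact Hsu | exfalso].
  assert (HD : C1 (fun t => X t + - Y t)) by (apply C1_plus; [| apply C1_opp]; assumption).
  destruct (C1_root _ 0 1 HD) as (c & Hc & HXYc); [lra | |].
  { rewrite <- Hu in Hsu; cbn [fst snd] in Hsu. rewrite HX1, HY1. nra. }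
  assert (Hc1 : c < 1).
  { destruct Hc as [_ [Hc1 | ->]]; [exact Hc1 |]. rewrite HX1, HY1 in HXYc. nra. }
  assert (Hinc : lin (-1) 0 (sq (X c, Y c)) < lin (-1) 0 (sq (X 1, Y 1))).
  { apply (timelike_lin_increasing zeta k (-1) 0 X Y null_slope_pos null_slope_sq);
      auto; try lra.
    - intros w. pose proof null_slope_pos. unfold nullL, nullM, lin. nra.
    - intros t Ht. apply HT, Ht. }
  rewrite HX1, HY1 in Hinc. unfold lin, sq in Hinc; cbn [fst snd] in Hinc.
  replace (Y c) with (X c) in Hinc by lra. nra.
Qed.

Lemma chron_apt_spec u : chron eps zeta u (apt eps zeta) ->
  inN eps u /\ snd u < fst u /\ nullL k (sq u) < 0 /\ nullM k (sq u) < 0.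
Proof.
  pose proof null_slope_pos as Hk. pose proof null_slope_sq as Hkk.
  pose proof apt_below_diag as Ha0. unfold apt in Ha0; cbn [fst snd] in Ha0.
  intros Hch. split; [| split; [exact (chron_apt_below_diag u Hch) | split]].
  - destruct Hch as (X & Y & _ & _ & <- & _ & HT). apply (HT 0). lra.
  - rewrite <- nullL_apt.
    exact (chron_lin_lt eps zeta k (- k) 1 u _ Hk Hkk (fun _ HL _ => HL) Hch).
  - apply (Rlt_trans _ (nullM k (sq (apt eps zeta)))).
    + exact (chron_lin_lt eps zeta k (- k) (- 1) u _ Hk Hkk (fun _ _ HM => HM) Hch).
    + unfold nullM, lin, sq, apt; cbn [fst snd].
      assert (0 < k * ((eps / 2) ^ 2 - (eps / 2 * tan_half zeta) ^ 2))
        by (apply Rmult_lt_0_compat; nra).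
      nra.
Qed.

Lemma bpt_up : up eps zeta (Ipast eps zeta (apt eps zeta)) (bpt eps).
Proof.
  destruct (bpt_nbhd eps k Heps null_slope_pos) as (r & Hr & Hnear).
  exists r. split; [exact Hr |]. intros c Hc.
  destruct (Hnear c Hc) as (HNc & Hsc & HLc & HMc).
  split; [exact HNc |]. intros u Hu.
  destruct (chron_apt_spec u Hu) as (HNu & Hsu & HLu & HMu).
  apply (chron_of_null_separated eps zeta k); auto using null_slope_pos, null_slope_sq.
Qed.

End Trousers.

Theorem lemma2 (eps zeta : R) (Heps : 0 < eps) (Hzeta : 1 < zeta) :
  ~ causally_continuous eps zeta.
Proof.
  intros HC.
  destruct (HC (apt eps zeta) (apt_in eps zeta Heps Hzeta)) as [Hfut _].
  apply (not_chron_apt_bpt eps zeta Heps Hzeta).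
  apply Hfut, bpt_up; assumption.
Qed.
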